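(* Let $\mathbb{F}$ be a field, let $n \geq 3$, and let $a,b,c \in \{-1,1\}$ (elements of $\mathbb{F}$). Let $A=(A_{i,j})$ be the $n\times n$ matrix over $\mathbb{F}$ whose entries are: $A_{1,2} = -c$ and $A_{2,1} = c$; $A_{n-1,n} = b$ and $A_{n,n-1} = a$; $A_{i,i+2} = -1$ and $A_{i+2,i} = 1$ for all $1 \leq i \leq n-2$; and all other entries equal to $0$. (For example, for $n=3$ and $n=4$ this gives $A=\begin{pmatrix} 0 & -c & -1 \\ c & 0 & b \\ 1 & a & 0\end{pmatrix}$ and $A=\begin{pmatrix} 0 & -c & -1 & 0 \\ c & 0 & 0 & -1 \\ 1 & 0 & 0 & b \\ 0 & 1 & a & 0\end{pmatrix}$, respectively.) If the rank of $A$ is even, then $a = -b$ (i.e., $A$ is skew-symmetric).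
   Context: An $n\times n$ matrix $A$ over a field is skew-symmetric if $A^T = -A$ and every diagonal entry of $A$ is zero. *)

From HB Require Import structures.
From mathcomp Require Import all_boot all_order all_algebra.
Set Implicit Arguments. Unset Strict Implicit. Unset Printing Implicit Defensive.
Import GRing.Theory.
Local Open Scope ring_scope.

(* The n x n matrix A(a,b,c) of the paper, with 0-based indices:
   paper index k (1 <= k <= n) corresponds to ordinal k-1.
   A_{1,2} = -c, A_{2,1} = c, A_{n-1,n} = b, A_{n,n-1} = a,
   A_{i,i+2} = -1, A_{i+2,i} = 1, all other entries 0. *)
Definition Amx (F : fieldType) (n : nat) (a b c : F) : 'M[F]_n :=
  \matrix_(i < n, j < n)
    if (i == 0%N :> nat) && (j == 1%N :> nat) then - c
    else if (i == 1%N :> nat) && (j == 0%N :> nat) then c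
    else if (i == n.-2 :> nat) && (j == n.-1 :> nat) then b
    else if (i == n.-1 :> nat) && (j == n.-2 :> nat) then a
    else if (j == i.+2 :> nat) then -1
    else if (i == j.+2 :> nat) then 1
    else 0.

(* Since a, b are signs, a <> -b means a = b, and in characteristic 2 always
   a = -b; so it suffices to show that A(a, a, c) has odd rank when 2 != 0.
   With indices from 0, a row vector x with x A = 0 satisfies
   x_(j+2) = x_(j-2) for every column j but the last two, where x_2 = -c x_1
   and x_3 = c x_0: it is 4-periodic and determined by (x_0, x_1).  Hence the
   left kernel of A is parametrised by that of the 2 x 2 matrix E of the two
   remaining column equations, and rank A = n - 2 + rank E.  For a = b, E is
   nonzero and singular exactly when n is even, so rank A is n or n - 1,
   whichever is odd. *)

From mathcomp Require Import all_boot all_order all_algebra zify ring.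
Import GRing.Theory.
Local Open Scope ring_scope.

Section AmxRank.
Set Implicit Arguments. Unset Strict Implicit. Unset Printing Implicit Defensive.
Variable F : fieldType.

Lemma sum_ord_delta n (g : nat -> F) (t : nat) (B : bool) (v : F) :
  \sum_(k < n) g k * (if (k == t :> nat) && B then v else 0) =
  if (t < n)%N && B then v * g t else 0.
Proof.
case: (boolP (t < n)%N) => [tn | tNn] /=; last first.
  by apply: big1 => k _; case: eqP => [kt | _]; [rewrite -kt ltn_ord in tNn | rewrite mulr0].
rewrite (bigD1 (Ordinal tn)) //= eqxx big1 ?addr0 => [|k /negPf kt].
  by case: B; rewrite ?mulr0 // mulrC.
by rewrite -val_eqE /= in kt; rewrite kt mulr0.
Qed.

Lemma det_mx22 (E : 'M[F]_2) : \det E = E 0 0 * E 1 1 - E 0 1 * E 1 0.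
Proof.
rewrite (expand_det_row _ 0) !big_ord_recl big_ord0 /cofactor !det_mx11 !mxE /=.
rewrite addr0 expr0 expr1 mul1r mulN1r mulrN.
by congr (E _ _ * E _ _ - E _ _ * E _ _); apply/eqP.
Qed.

Lemma mxrank2_det0 (E : 'M[F]_2) : \det E = 0 -> E != 0 -> \rank E = 1%N.
Proof.
move=> detE0 E_neq0.
have : ~~ row_free E by rewrite row_free_unit unitmxE unitfE detE0 eqxx.
rewrite /row_free => /negPf rankE_neq2.
have : \rank E != 0%N by rewrite mxrank_eq0.
by have := rank_leq_row E; lia.
Qed.

Lemma row_free_colsub1 k n (M : 'M[F]_(k, n)) (s : 'I_k -> 'I_n) :
  colsub s M = 1%:M -> row_free M.
Proof. by move=> sM; apply/row_freeP; exists (colsub s 1%:M); rewrite mulmx_colsub mulmx1. Qed.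

Lemma mxrank_ker_param k n (A : 'M[F]_n) (P Q : 'M[F]_(k, n)) (E : 'M[F]_k) :
  row_free P -> row_free Q -> (kermx A <= P)%MS -> P *m A = E *m Q ->
  (\rank A + k = \rank E + n)%N.
Proof.
move=> freeP freeQ kerA_P PA_EQ.
have kerA_E : (kermx A :=: kermx E *m P)%MS.
  apply/eqmxP/andP; split.
    rewrite -(mulmxKpV kerA_P) submxMr // sub_kermx -(mulmx_free_eq0 _ freeQ).
    by rewrite -mulmxA -PA_EQ mulmxA mulmxKpV // mulmx_ker.
  by rewrite sub_kermx -mulmxA PA_EQ mulmxA mulmx_ker mul0mx.
have := mxrank_ker A; rewrite kerA_E mxrankMfree // mxrank_ker.
by have := rank_leq_row A; have := rank_leq_row E; lia.
Qed.

Section Amx.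
Variables (m : nat) (a b c : F).
Local Notation n := m.+3.

Definition prev2 (g : nat -> F) (j : nat) : F :=
  if j == 0%N then - c * g 1%N else if j == 1%N then c * g 0%N else g (j - 2)%N.

Definition amx_col (g : nat -> F) (j : nat) : F :=
  (if (j.+2 < n)%N then g j.+2 else 0) - prev2 g j
  + (if j == m.+1 then a * g m.+2 else 0) + (if j == m.+2 then b * g m.+1 else 0).

Lemma AmxE (k j : 'I_n) : Amx n a b c k j =
    (if (k == 0%N :> nat) && (j == 1%N :> nat) then - c else 0)
  + (if (k == 1%N :> nat) && (j == 0%N :> nat) then c else 0)
  + (if (k == m.+1 :> nat) && (j == m.+2 :> nat) then b else 0)
  + (if (k == m.+2 :> nat) && (j == m.+1 :> nat) then a else 0)
  + (if j == k.+2 :> nat then -1 else 0) + (if k == j.+2 :> nat then 1 else 0).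
Proof.
rewrite mxE /=; move: (nat_of_ord k) (nat_of_ord j) => {k j} k j.
do 4 (case: ifP => [/andP[/eqP-> /eqP->] | _] /=;
  first by do ?(case: ifP => ?; try (exfalso; lia)); rewrite ?addr0 ?add0r).
case: ifP => [jE | _] /=; first by case: ifP => ?; [lia | rewrite !add0r addr0].
by case: ifP => _; rewrite !add0r.
Qed.

Lemma mul_row_Amx (g : nat -> F) (j : 'I_n) :
  ((\row_(k < n) g k) *m Amx n a b c) 0 j = amx_col g j.
Proof.
have jE (k : nat) : (j == k.+2 :> nat) = (k == j - 2)%N && (2 <= j)%N by lia.
rewrite mxE; under eq_bigr => k _
  do rewrite mxE AmxE (jE k) -[k == j.+2 :> nat]andbT !mulrDr.
rewrite !big_split /= !sum_ord_delta andbT.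
have -> : (j - 2 < n)%N by have := ltn_ord j; lia.
rewrite (_ : (m.+1 < n)%N) // (_ : (m.+2 < n)%N) // /amx_col /prev2 mul1r.
(* ring only accepts the remaining conditionals once they are abstracted *)
case: (nat_of_ord j) => [|[|j']] /=;
  by do ?[let t := fresh "t" in set t := (if _ then _ else _); clearbody t]; ring.
Qed.

Definition per4 (p q : F) (k : nat) : F :=
  match (k %% 4)%N with 0%N => p | 1%N => q | 2%N => - c * q | _ => c * p end.

Lemma per4S4 p q k : per4 p q k.+4 = per4 p q k.
Proof. by rewrite /per4 -addn4 modnDr. Qed.

Lemma per4_lin p q k : per4 p q k = p * per4 1 0 k + q * per4 0 1 k.
Proof. by rewrite /per4; case: (k %% 4)%N => [|[|[|?]]]; ring. Qed.

Lemma per4_prev2 p q j : per4 p q j.+2 = prev2 (per4 p q) j.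
Proof. by case: j => [|[|j]]; rewrite /prev2 //= per4S4 subn2. Qed.

Lemma amx_col0_per4 (g : nat -> F) :
  (forall j, (j <= m)%N -> amx_col g j = 0) ->
  forall k, (k < n)%N -> g k = per4 (g 0%N) (g 1%N) k.
Proof.
move=> g_eq k; elim/ltn_ind: k => -[|[|j]] IH jn; [by [] | by [] |].
have gj : g j.+2 = prev2 g j.
  apply: subr0_eq; rewrite -(g_eq j) /amx_col; last by lia.
  by rewrite jn !ltn_eqF ?addr0 // ltnW.
rewrite gj per4_prev2 /prev2; case: j jn {gj} IH => [|[|j]] jn IH /=; [by [] | by [] |].
by rewrite subn2 IH //; lia.
Qed.

Definition amx_end (g : nat -> F) (j : 'I_2) : F :=
  if j == 0 then a * g m.+2 - g m.+3 else b * g m.+1 - g m.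

Lemma amx_col_per4 p q (j : nat) : (j < n)%N ->
  amx_col (per4 p q) j =
  if j == m.+1 then amx_end (per4 p q) 0
  else if j == m.+2 then amx_end (per4 p q) 1 else 0.
Proof.
move=> jn; rewrite /amx_col -per4_prev2.
have [->|j1] := eqVneq j m.+1; first by rewrite ltnn ltn_eqF // /amx_end /=; ring.
have [->|j2] := eqVneq j m.+2; first by rewrite ltnNge leqnSn per4S4 /amx_end /=; ring.
by rewrite (_ : (j.+2 < n)%N) ?subrr ?addr0 //; lia.
Qed.

Definition per4_basis (i : 'I_2) : nat -> F := per4 (i == 0)%:R (i == 1)%:R.
Definition per4_mx : 'M[F]_(2, n) := \matrix_(i, k) per4_basis i k.
Definition tail_mx : 'M[F]_(2, n) := \matrix_(i, k) (k == (i + m.+1)%N :> nat)%:R.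
Definition end_mx : 'M[F]_2 := \matrix_(i, j) amx_end (per4_basis i) j.

Lemma per4_mx_free : row_free per4_mx.
Proof.
apply: (row_free_colsub1 (s := fun j => inord j)).
apply/matrixP => i j; rewrite !mxE inordK; last by have := ltn_ord j; lia.
by case: i j => [[|[|//]] ?] [[|[|//]] ?].
Qed.

Lemma tail_mx_free : row_free tail_mx.
Proof.
apply: (row_free_colsub1 (s := fun j => inord (j + m.+1)%N)).
apply/matrixP => i j; rewrite !mxE inordK ?eqn_add2r; last by have := ltn_ord j; lia.
by rewrite eq_sym.
Qed.

Lemma kermx_Amx_sub_per4 : (kermx (Amx n a b c) <= per4_mx)%MS.
Proof.
apply/row_subP => r; set x := row r _.
have xA : x *m Amx n a b c = 0 by apply/eqP; rewrite -sub_kermx row_sub.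
pose g k := x 0 (inord k).
have xg : x = \row_(k < n) g k by apply/rowP => k; rewrite mxE /g inord_val.
have g_per4 : forall k, (k < n)%N -> g k = per4 (g 0%N) (g 1%N) k.
  apply: amx_col0_per4 => j jm.
  have jn : (j < n)%N by lia.
  by rewrite -(@inordK m.+2 j jn) -mul_row_Amx -xg xA mxE.
have -> : x = g 0%N *: row 0 per4_mx + g 1%N *: row 1 per4_mx.
  by apply/rowP => k; rewrite xg !mxE g_per4 // per4_lin.
by rewrite addmx_sub // scalemx_sub // row_sub.
Qed.

Lemma per4_mx_mul_Amx : per4_mx *m Amx n a b c = end_mx *m tail_mx.
Proof.
apply/matrixP => i k.
have -> : (per4_mx *m Amx n a b c) i k =
          ((\row_(l < n) per4_basis i l) *m Amx n a b c) 0 k.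
  by rewrite !mxE; apply: eq_bigr => l _; rewrite !mxE.
rewrite mul_row_Amx amx_col_per4 // mxE !big_ord_recl big_ord0 !mxE addr0 /= add0n add1n.
rewrite /per4_basis /amx_end /= !mulr_natr.
have [->|_] := eqVneq (k : nat) m.+1; first by rewrite ltn_eqF // mulr1n mulr0n addr0.
by case: eqP; rewrite ?mulr1n mulr0n ?add0r.
Qed.

Lemma mxrank_Amx : (\rank (Amx n a b c) + 2 = \rank end_mx + n)%N.
Proof.
exact: mxrank_ker_param per4_mx_free tail_mx_free kermx_Amx_sub_per4 per4_mx_mul_Amx.
Qed.

End Amx.

Lemma end_mxS4 m (a b c : F) : end_mx m.+4 a b c = end_mx m a b c.
Proof. by apply/matrixP => i j; rewrite !mxE /amx_end /per4_basis !per4S4. Qed.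

Lemma mxrank_end_mx_sym m (a c : F) :
  a * a = 1 -> c * c = 1 -> (2 : F) != 0 ->
  \rank (end_mx m a a c) = if odd m then 1%N else 2%N.
Proof.
move=> a2 c2 two0.
have sq_neq0 (x : F) : x * x = 1 -> x != 0.
  by move=> x2; apply: contra_eq_neq x2 => ->; rewrite mul0r eq_sym oner_neq0.
have two_a_c : 2 * a * c != 0 by rewrite !mulf_neq0 // sq_neq0.
have rank2 (E : 'M[F]_2) : \det E != 0 -> \rank E = 2%N.
  by move=> dE; rewrite mxrank_unit // unitmxE unitfE.
have mx_neq0 (E : 'M[F]_2) i j k l : E i j - E k l != 0 -> E != 0.
  by move=> h; apply: contraNneq h => ->; rewrite !mxE subrr eqxx.
elim/ltn_ind: m => -[|[|[|[|m]]]] IH; last by rewrite end_mxS4 IH /= ?negbK //; lia.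
- apply: rank2; rewrite (_ : \det _ = - (2 * a * c)) ?oppr_eq0 //.
  by rewrite det_mx22 !mxE /amx_end /per4_basis /per4 /=; ring.
- apply: mxrank2_det0.
    by rewrite det_mx22 !mxE /amx_end /per4_basis /per4 /=; ring: a2 c2.
  apply: (mx_neq0 _ 0 0 1 1); rewrite (_ : _ - _ = 2 * a * c) //.
  by rewrite !mxE /amx_end /per4_basis /per4 /=; ring.
- apply: rank2; rewrite (_ : \det _ = 2 * a * c) //.
  by rewrite det_mx22 !mxE /amx_end /per4_basis /per4 /=; ring.
- apply: mxrank2_det0.
    by rewrite det_mx22 !mxE /amx_end /per4_basis /per4 /=; ring: a2 c2.
  apply: (mx_neq0 _ 0 1 1 0); rewrite (_ : _ - _ = - (2 * c)).
    by rewrite oppr_eq0 mulf_neq0 // sq_neq0.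
  by rewrite !mxE /amx_end /per4_basis /per4 /=; ring.
Qed.

Lemma mxrank_Amx_sym m (a c : F) :
  a * a = 1 -> c * c = 1 -> (2 : F) != 0 ->
  \rank (Amx m.+3 a a c) = if odd m then m.+2 else m.+3.
Proof.
move=> a2 c2 two0; have := mxrank_Amx m a a c.
by rewrite mxrank_end_mx_sym //; case: ifP; lia.
Qed.

End AmxRank.

Theorem mainTheorem1 (F : fieldType) (n : nat) (a b c : F) :
  (3 <= n)%N ->
  (a = 1 \/ a = -1) -> (b = 1 \/ b = -1) -> (c = 1 \/ c = -1) ->
  ~~ odd (\rank (Amx n a b c)) ->
  a = - b.
Proof.
move=> n3 a_sgn b_sgn c_sgn rank_even.
have sq1 (x : F) : x = 1 \/ x = -1 -> x * x = 1 by case=> ->; rewrite ?mulrNN mulr1.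
have [two0 | two_neq0] := eqVneq (2 : F) 0.
  have N1 : (-1 : F) = 1 by apply/eqP; rewrite eq_sym -addr_eq0 -mulr2n two0.
  by case: a_sgn b_sgn => -> [] ->; rewrite ?opprK ?N1.
have [ba | ab] := eqVneq b a.
  case: n n3 rank_even => [|[|[|m]]] // _.
  by rewrite ba mxrank_Amx_sym ?sq1 //; case: ifP => /= ->.
by case: a_sgn b_sgn ab => -> [] ->; rewrite ?eqxx ?opprK.
Qed.
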